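(* Consider the full-duplex (FD) single-stage relay selection (SRS) scheme described in the context, with $\varpi=1$, thresholds $\gamma_{th_j}=2^{R_{D_j}}-1$ for $j=1,2$, and power coefficients satisfying $0<a_1<a_2$, $a_1+a_2=1$, $a_2>a_1\gamma_{th_2}$. Then its diversity order is zero: $$-\lim_{\rho\to\infty}\frac{\log P_{SRS}^{FD}(\rho)}{\log\rho}=0 .$$
   Context: Network model. A base station (BS) is at the origin of the plane. There are $K\ge 1$ relays $R_1,\dots,R_K$ whose positions are i.i.d. uniformly distributed in the disc of radius $R_{\mathcal D}>0$ centred at the origin; $d_{SR_i}$ is the distance from the BS to $R_i$. Two users $D_1,D_2$ are at fixed points of the plane at distances $d_1,d_2>0$ from the BS, and $d_{R_iD_j}$ is the Euclidean distance between $R_i$ and $D_j$. Let $\alpha>0$ be the path loss exponent. The random variables $g_{SR_i}$, $g_{R_iD_1}$, $g_{R_iD_2}$ ($i=1,\dots,K$) are exponentially distributed with mean $1$ (squared magnitudes of $\mathcal{CN}(0,1)$ Rayleigh coefficients), $Z_i$ ($i=1,\dots,K$) is exponentially distributed with mean $\Omega_{LI}>0$ (loop-interference gain at $R_i$), and all of these are mutually independent and independent of the relay positions. Put $X_i=g_{SR_i}/(1+d_{SR_i}^\alpha)$ and $Y_{ji}=g_{R_iD_j}/(1+d_{R_iD_j}^\alpha)$. Let $\rho>0$ be the transmit SNR, $a_1,a_2$ power allocation coefficients, and $\varpi\in\{0,1\}$ the duplex factor. Define $\gamma_{D_2\to R_i}=\frac{\rho X_i a_2}{\rho X_i a_1+\rho\varpi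 Z_i+1}$, $\gamma_{D_1\to R_i}=\frac{\rho X_i a_1}{\rho\varpi Z_i+1}$, $\gamma^{(i)}_{D_2\to D_1}=\frac{\rho Y_{1i}a_2}{\rho Y_{1i}a_1+1}$, $\gamma^{(i)}_{D_1}=\rho Y_{1i}a_1$, $\gamma^{(i)}_{D_2}=\frac{\rho Y_{2i}a_2}{\rho Y_{2i}a_1+1}$. Target rates $R_{D_1},R_{D_2}>0$ are given; in FD mode $\varpi=1$ and $\gamma_{th_j}=2^{R_{D_j}}-1$; in HD mode $\varpi=0$ and $\gamma_{th_j}=2^{2R_{D_j}}-1$. SRS scheme: with $W_i=\min\{\gamma_{D_2\to R_i},\gamma^{(i)}_{D_2\to D_1},\gamma^{(i)}_{D_2}\}$, the outage probability is $P_{SRS}(\rho)=\Pr(\max_{1\le i\le K}W_i<\gamma_{th_2})$; $P_{SRS}^{FD}$ denotes it in FD mode. *)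

From HB Require Import structures.
From mathcomp Require Import all_boot all_order all_algebra.
From mathcomp Require Import all_classical all_reals all_analysis.
Set Implicit Arguments. Unset Strict Implicit. Unset Printing Implicit Defensive.
Import Order.TTheory GRing.Theory Num.Def Num.Theory.
Import numFieldNormedType.Exports.
Local Open Scope classical_set_scope.
Local Open Scope ring_scope.

Definition disc {R : realType} (RD : R) : set (R * R) :=
  [set p | p.1 ^+ 2 + p.2 ^+ 2 <= RD ^+ 2].

Definition unif_disc {R : realType} (RD : R) (A : set (R * R)) : \bar R :=
  ((@lebesgue_measure R \x @lebesgue_measure R) (A `&` disc RD)
     * ((pi * RD ^+ 2)^-1)%:E)%E.

Definition expo_mean {R : realType} (m : R) (B : set R) : \bar R :=
  exponential_prob (m^-1) B.

Definition dist2 {R : realType} (p q : R * R) : R :=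
  Num.sqrt ((p.1 - q.1) ^+ 2 + (p.2 - q.2) ^+ 2).

Definition plgain {R : realType} (alpha d : R) : R := (1 + d `^ alpha)^-1.

(* Random-variable model: K relays with i.i.d. uniform positions in the disc,
   unit-mean exponential small-scale gains g_SR, g_RD1, g_RD2, and loop
   interference Z with mean OmegaLI, all mutually independent.  Mutual
   independence together with the marginal laws is stated as the
   factorization of the joint law on all measurable rectangles. *)
Definition relay_model {R : realType} {d : measure_display} {T : measurableType d}
  (P : probability T R) (K : nat) (RD OmegaLI : R)
  (pos : 'I_K -> T -> R * R) (gSR gR1 gR2 Z : 'I_K -> T -> R) : Prop :=
  (forall i, measurable_fun setT (pos i)) /\
  (forall i, measurable_fun setT (gSR i)) /\
  (forall i, measurable_fun setT (gR1 i)) /\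
  (forall i, measurable_fun setT (gR2 i)) /\
  (forall i, measurable_fun setT (Z i)) /\
      forall (A : 'I_K -> set (R * R)) (B1 B2 B3 B4 : 'I_K -> set R),
        (forall i, measurable (A i)) -> (forall i, measurable (B1 i)) ->
        (forall i, measurable (B2 i)) -> (forall i, measurable (B3 i)) ->
        (forall i, measurable (B4 i)) ->
        P (\bigcap_(i in [set: 'I_K])
              [set w | [/\ A i (pos i w), B1 i (gSR i w), B2 i (gR1 i w),
                           B3 i (gR2 i w) & B4 i (Z i w)]])
        = (\prod_(i < K) (unif_disc RD (A i) * expo_mean 1 (B1 i)
                           * expo_mean 1 (B2 i) * expo_mean 1 (B3 i)
                           * expo_mean OmegaLI (B4 i)))%E.

Definition W_srs {R : realType} (rho a1 a2 varpi X Y1 Y2 Zi : R) : R :=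
  Num.min (rho * X * a2 / (rho * X * a1 + rho * varpi * Zi + 1))
    (Num.min (rho * Y1 * a2 / (rho * Y1 * a1 + 1))
             (rho * Y2 * a2 / (rho * Y2 * a1 + 1))).

(* Outage probability of the SRS scheme:
   Pr(max_i W_i < gth2), where the BS is at the origin and D1, D2 are at
   the points u1, u2 of the plane. *)
Definition P_SRS {R : realType} {d : measure_display} {T : measurableType d}
  (P : probability T R) (K : nat) (alpha : R) (u1 u2 : R * R)
  (pos : 'I_K -> T -> R * R) (gSR gR1 gR2 Z : 'I_K -> T -> R)
  (a1 a2 varpi gth2 rho : R) : \bar R :=
  P [set w | forall i : 'I_K,
       W_srs rho a1 a2 varpi
         (gSR i w * plgain alpha (dist2 (pos i w) (0, 0)))
         (gR1 i w * plgain alpha (dist2 (pos i w) u1))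
         (gR2 i w * plgain alpha (dist2 (pos i w) u2))
         (Z i w) < gth2].

From HB Require Import structures.
From mathcomp Require Import all_boot all_order all_algebra.
From mathcomp Require Import all_classical all_reals all_analysis.
From mathcomp Require Import measurable_realfun exponential_distribution lra.
Import Order.TTheory GRing.Theory Num.Def Num.Theory.
Import numFieldNormedType.Exports.
Local Open Scope classical_set_scope.
Local Open Scope ring_scope.

(* Full-duplex loop interference caps the first-hop SINR of every relay: if
   its source gain is at most 1 and its loop-interference gain Z satisfies
   a2 < Z gth2, then rho X a2 / (rho X a1 + rho Z + 1) < gth2 for every SNR
   rho.  By independence, all relays are in this situation with a probability
   c > 0 that does not depend on rho, so c <= P_SRS <= 1 and ln P_SRS stays
   bounded while ln rho tends to +oo. *)

Lemma measurable_inv (R : realType) : measurable_fun [set: R] (@GRing.inv R).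
Proof.
have -> : GRing.inv = fun x : R => if x == 0 then 0 else x^-1.
  by apply/funext => x; case: eqP => // ->; rewrite invr0.
apply: measurable_fun_if => //.
- apply: (measurable_fun_bool true); rewrite setTI.
  have -> : (fun x : R => x == 0) @^-1` [set true] = [set 0].
    by apply/seteqP; split => x /= /eqP.
  exact: measurable_set1.
- rewrite setTI; apply: (@measurable_funS _ _ _ _ [set r : R | r != 0]).
  + exact: open_measurable.
  + by move=> x /= /negbT.
  + apply: open_continuous_measurable_fun => //; apply/in_setP => x /= x0.
    exact: inv_continuous.
Qed.

Lemma measurable_forall (d : measure_display) (T : measurableType d)
  (I : finType) (F : I -> set T) :
  (forall i, measurable (F i)) -> measurable [set w | forall i, F i w].
Proof.
move=> mF; have -> : [set w | forall i, F i w] = \bigcap_(i in [set: I]) F i.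
  by apply/seteqP; split => w /= Fw i //; exact: Fw.
by apply: fin_bigcap_measurable => // i _; exact: mF.
Qed.

Section measurable_channel.
Context {R : realType} {d : measure_display} {T : measurableType d}.

Lemma measurable_fun_W_srs (rho a1 a2 varpi : R) (X Y1 Y2 Zi : T -> R) :
  measurable_fun setT X -> measurable_fun setT Y1 -> measurable_fun setT Y2 ->
  measurable_fun setT Zi ->
  measurable_fun setT (fun w => W_srs rho a1 a2 varpi (X w) (Y1 w) (Y2 w) (Zi w)).
Proof.
move=> mX mY1 mY2 mZ; rewrite /W_srs.
have mdiv (f g : T -> R) : measurable_fun setT f -> measurable_fun setT g ->
    measurable_fun setT (fun w => f w / g w).
  by move=> mf mg; apply: measurable_funM mf (measurableT_comp (measurable_inv R) mg).
repeat first [ apply: measurable_minr | apply: mdiv | apply: measurable_funD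
             | apply: measurable_funM | exact: measurable_cst | assumption ].
Qed.

Lemma measurable_fun_plgain_dist2 (alpha : R) (p : T -> R * R) (u : R * R) :
  measurable_fun setT p -> measurable_fun setT (fun w => plgain alpha (dist2 (p w) u)).
Proof.
move=> mp; rewrite /plgain /dist2.
apply: measurableT_comp (measurable_inv R) _; apply: measurable_funD => //.
apply: measurableT_comp (measurable_powR _) _.
apply: measurableT_comp; first exact: continuous_measurable_fun (@sqrt_continuous R).
apply: measurable_funD; apply: measurable_funX; apply: measurable_funB => //.
- exact: measurableT_comp measurable_fst mp.
- exact: measurableT_comp measurable_snd mp.
Qed.

End measurable_channel.

Lemma exponential_prob_itvcy (R : realType) (rate x : R) : 0 < rate -> 0 <= x ->
  exponential_prob rate `[x, +oo[ = (expR (- rate * x))%:E.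
Proof.
move=> rate_gt0 x_ge0.
have cexpNM : continuous (fun z : R^o => expR (- rate * z)).
  move=> z; apply: continuous_comp; last exact: continuous_expR.
  by apply: continuousM => //; apply: (@continuousN _ R^o); exact: cst_continuous.
rewrite /exponential_prob (@ge0_continuous_FTC2y _ _ (fun z => - expR (- rate * z)) x 0).
- by rewrite sub0e EFinN oppeK.
- by move=> z _; apply: exponential_pdf_ge0; exact: ltW.
- apply: (@continuous_subspaceW R^o _ _ [set` `[0, +oo[%R]).
    by move=> z /=; rewrite !in_itv /= !andbT; exact: le_trans.
  exact: within_continuous_exponential_pdf.
- rewrite -oppr0; apply: cvgN.
  have -> : (fun z => expR (- rate * z)) = (fun z => expR (- z)) \o ( *%R rate).
    by apply: eq_fun => z; rewrite mulNr.
  apply: (@cvg_comp _ _ _ _ _ _ (pinfty_nbhs R)); last exact: cvgr_expR.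
  exact: gt0_cvgMry.
- by move=> z _; exact: ex_derive.
- by apply: cvgN; apply/cvg_at_right_filter; exact: cexpNM.
- move=> z; rewrite in_itv /= andbT => xz.
  by apply: derive1_exponential_pdf; rewrite in_itv /= andbT (le_lt_trans x_ge0).
Qed.

Lemma expo_mean_setT (R : realType) (m : R) : 0 < m -> expo_mean m setT = 1%E.
Proof. by move=> m_gt0; apply: integral_exponential_pdf; rewrite invr_gt0. Qed.

Lemma expo_mean_itv0c_gt0 (R : realType) (m x : R) : 0 < m -> 0 < x ->
  (0 < expo_mean m `[0%R, x]%classic)%E.
Proof.
move=> m_gt0 x_gt0; rewrite /expo_mean exponential_prob_itv0c // -EFinB lte_fin.
by rewrite subr_gt0 expR_lt1 mulNr oppr_lt0 mulr_gt0 ?invr_gt0.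
Qed.

Lemma expo_mean_itvcy_gt0 (R : realType) (m x : R) : 0 < m -> 0 <= x ->
  (0 < expo_mean m `[x, +oo[%classic)%E.
Proof.
by move=> m_gt0 x_ge0; rewrite /expo_mean exponential_prob_itvcy ?invr_gt0 ?lte_fin ?expR_gt0.
Qed.

Lemma plgain_ge0 (R : realType) (alpha d : R) : 0 <= plgain alpha d.
Proof. by rewrite /plgain invr_ge0 addr_ge0 ?powR_ge0. Qed.

Lemma plgain_le1 (R : realType) (alpha d : R) : plgain alpha d <= 1.
Proof. by rewrite /plgain invf_le1 ?lerDl ?powR_ge0 // ltr_pwDl ?powR_ge0. Qed.

Lemma W_srs_lt (R : realType) (rho a1 a2 varpi gth X Y1 Y2 Zi : R) :
  0 < rho -> 0 <= a1 -> 0 <= a2 -> 0 < gth -> 0 <= X <= 1 ->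
  a2 < varpi * Zi * gth -> W_srs rho a1 a2 varpi X Y1 Y2 Zi < gth.
Proof.
move=> rho_gt0 a1_ge0 a2_ge0 gth_gt0 /andP[X_ge0 X_le1] interf.
rewrite /W_srs gt_min; apply/orP; left.
have vZ_gt0 : 0 < varpi * Zi by rewrite -(pmulr_lgt0 _ gth_gt0) (le_lt_trans a2_ge0).
have rXa1_ge0 : 0 <= rho * X * a1 by rewrite !mulr_ge0 // ltW.
have rvZ_gt0 : 0 < rho * varpi * Zi by rewrite -mulrA mulr_gt0.
rewrite ltr_pdivrMr; last by lra.
have : rho * X * a2 <= rho * a2 by rewrite -mulrA ler_pM2l // ler_piMl.
have : rho * a2 < rho * (varpi * Zi * gth) by rewrite ltr_pM2l.
have : 0 <= gth * (rho * X * a1) by rewrite mulr_ge0 // ltW.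
nra.
Qed.

Lemma bounded_div_ln_cvg0 (R : realType) (g : R -> R) (B : R) :
  (\forall x \near +oo, `|g x| <= B) -> (g x / ln x) @[x --> +oo] --> 0.
Proof.
move=> gB; apply/cvgr0Pnorm_lt => e e_gt0.
near=> x.
have ln_gt0 : 0 < ln x by apply: ln_gt0; near: x; exact: nbhs_pinfty_gt.
rewrite normrM normfV (gtr0_norm ln_gt0) ltr_pdivrMr //.
apply: le_lt_trans (_ : B < e * ln x); first by near: x.
rewrite -ltr_pdivrMl // -ltr_expR lnK ?posrE; last by near: x; exact: nbhs_pinfty_gt.
near: x; apply: nbhs_pinfty_gt; exact: num_real.
Unshelve. all: end_near. Qed.

Section relay_model.
Context {R : realType} {d : measure_display} {T : measurableType d}.
Context {P : probability T R} {K : nat} {RD OmegaLI : R}.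
Context {pos : 'I_K -> T -> R * R} {gSR gR1 gR2 Z : 'I_K -> T -> R}.
Hypothesis K_gt0 : (0 < K)%N.
Hypothesis OmegaLI_gt0 : 0 < OmegaLI.
Hypothesis model : relay_model P RD OmegaLI pos gSR gR1 gR2 Z.

(* Positivity of the disc's area is read off the factorization of [P setT = 1]
   rather than computed. *)
Lemma unif_disc_setT_gt0 : (0 < unif_disc RD setT)%E.
Proof.
have [_ [_ [_ [_ [_ factor]]]]] := model.
have := factor (fun=> setT) (fun=> setT) (fun=> setT) (fun=> setT) (fun=> setT)
  (fun=> measurableT) (fun=> measurableT) (fun=> measurableT) (fun=> measurableT)
  (fun=> measurableT).
rewrite (_ : \bigcap_(i in _) _ = setT); last by apply/seteqP; split => // w _ i _.
rewrite probability_setT !expo_mean_setT // !mule1 => prod1.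
rewrite lt0e; apply/andP; split.
  apply/eqP => u0; move: prod1; rewrite (bigD1 (Ordinal K_gt0)) //= u0 mul0e.
  by move/eqP; rewrite onee_eq0.
rewrite /unif_disc mule_ge0 // lee_fin invr_ge0 mulr_ge0 ?pi_ge0 //.
exact: sqr_ge0.
Qed.

Lemma relay_model_gain_event_gt0 (B1 B4 : set R) :
  measurable B1 -> measurable B4 ->
  (0 < expo_mean 1 B1)%E -> (0 < expo_mean OmegaLI B4)%E ->
  (0 < P [set w | forall i, B1 (gSR i w) /\ B4 (Z i w)])%E.
Proof.
move=> mB1 mB4 B1_gt0 B4_gt0; have [_ [_ [_ [_ [_ factor]]]]] := model.
have -> : [set w | forall i, B1 (gSR i w) /\ B4 (Z i w)] =
    \bigcap_(i in [set: 'I_K]) [set w | [/\ [set: R * R] (pos i w),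
      B1 (gSR i w), [set: R] (gR1 i w), [set: R] (gR2 i w) & B4 (Z i w)]].
  by apply/seteqP; split => w /= Hw i; [move=> _; case: (Hw i) | case: (Hw i I)].
rewrite (factor (fun=> setT) (fun=> B1) (fun=> setT) (fun=> setT) (fun=> B4)) //.
apply: (big_ind (fun x => 0 < x)%E) => // [x y|i _]; first exact: mule_gt0.
rewrite !expo_mean_setT // !mule1.
by apply: mule_gt0 => //; apply: mule_gt0 => //; exact: unif_disc_setT_gt0.
Qed.

Lemma measurable_outage_event (alpha : R) (u1 u2 : R * R) (a1 a2 varpi gth rho : R) :
  measurable [set w | forall i : 'I_K,
    W_srs rho a1 a2 varpi
      (gSR i w * plgain alpha (dist2 (pos i w) (0, 0)))
      (gR1 i w * plgain alpha (dist2 (pos i w) u1))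
      (gR2 i w * plgain alpha (dist2 (pos i w) u2)) (Z i w) < gth].
Proof.
have [mpos [mgSR [mgR1 [mgR2 [mZ _]]]]] := model.
apply: measurable_forall => i; rewrite -[X in measurable X]setTI.
apply: (measurable_fun_ltr _ (measurable_cst gth)) => //.
apply: measurable_fun_W_srs => //;
  by apply: measurable_funM => //; exact: measurable_fun_plgain_dist2.
Qed.

Lemma P_SRS_FD_bounded_below (alpha : R) (u1 u2 : R * R) (a1 a2 gth : R) :
  0 <= a1 -> 0 <= a2 -> 0 < gth ->
  exists2 c : R, 0 < c & forall rho, 0 < rho ->
    c <= fine (P_SRS P alpha u1 u2 pos gSR gR1 gR2 Z a1 a2 1 gth rho) <= 1.
Proof.
move=> a1_ge0 a2_ge0 gth_gt0; have [_ [mgSR [_ [_ [mZ _]]]]] := model.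
pose M := (a2 + 1) / gth.
have M_gt0 : 0 < M by rewrite divr_gt0 // ltr_wpDl.
pose G := [set w | forall i, `[0%R, 1%R]%classic (gSR i w) /\ `[M, +oo[%classic (Z i w)].
have mG : measurable G.
  apply: measurable_forall => i; apply: measurableI.
  - by rewrite -[X in measurable X]setTI; exact: mgSR.
  - by rewrite -[X in measurable X]setTI; exact: mZ.
have G_gt0 : (0 < P G)%E.
  apply: relay_model_gain_event_gt0 => //.
  - exact: expo_mean_itv0c_gt0.
  - by apply: expo_mean_itvcy_gt0 => //; exact: ltW.
have fin_P A : measurable A -> P A \is a fin_num.
  by move=> mA; rewrite ge0_fin_numE // (le_lt_trans (probability_le1 P mA)) ?ltry.
exists (fine (P G)); first by apply: fine_gt0; rewrite G_gt0 ltey_eq fin_P.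
move=> rho rho_gt0; rewrite /P_SRS; set E := [set w | _].
have mE : measurable E by exact: measurable_outage_event.
have GE : G `<=` E.
  move=> w Gw i; have [] := Gw i; rewrite /= !in_itv /= andbT => /andP[g_ge0 g_le1] ZM.
  apply: W_srs_lt => //.
    by rewrite mulr_ge0 ?plgain_ge0 //= mulr_ile1 ?plgain_ge0 ?plgain_le1.
  rewrite mul1r (lt_le_trans _ (_ : M * gth <= Z i w * gth)) ?ler_pM2r //.
  by rewrite divfK ?gt_eqF // ltrDl.
apply/andP; split.
  by apply: fine_le; [exact: fin_P | exact: fin_P | apply: le_measure; rewrite ?inE].
by have := fine_le (fin_P _ mE) (fin_numE 1) (probability_le1 P mE).
Qed.
End relay_model.

Theorem mainTheorem1 (R : realType) (d : measure_display) (T : measurableType d)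
  (P : probability T R) (K : nat) (RD OmegaLI alpha : R) (u1 u2 : R * R)
  (pos : 'I_K -> T -> R * R) (gSR gR1 gR2 Z : 'I_K -> T -> R)
  (RD1 RD2 a1 a2 : R) :
  (1 <= K)%N -> 0 < RD -> 0 < OmegaLI -> 0 < alpha ->
  0 < dist2 u1 (0, 0) -> 0 < dist2 u2 (0, 0) ->
  relay_model P RD OmegaLI pos gSR gR1 gR2 Z ->
  0 < RD1 -> 0 < RD2 ->
  let gth1 := 2 `^ RD1 - 1 in
  let gth2 := 2 `^ RD2 - 1 in
  0 < a1 -> a1 < a2 -> a1 + a2 = 1 -> a2 > a1 * gth2 ->
  (- (ln (fine (P_SRS P alpha u1 u2 pos gSR gR1 gR2 Z a1 a2 1 gth2 rho))
        / ln rho)) @[rho --> +oo] --> 0.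
Proof.
(* Neither the geometry nor the power split matters beyond a1, a2 >= 0: the
   loop-interference floor holds for every configuration. *)
move=> K_gt0 _ OmegaLI_gt0 _ _ _ model _ RD2_gt0 gth1 gth2 a1_gt0 a1_lt_a2 _ _.
have gth2_gt0 : 0 < gth2.
  rewrite subr_gt0 lt_neqAle eq_sym powR_eq1 (gt_eqF RD2_gt0) pnatr_eq1 ltNge.
  by rewrite ler0n /= -{1}(powRr0 2) ler_powR ?ler1n // ltW.
have [c c_gt0 outage_ge] := P_SRS_FD_bounded_below K_gt0 OmegaLI_gt0 model
  alpha u1 u2 a1 a2 gth2 (ltW a1_gt0) (ltW (lt_trans a1_gt0 a1_lt_a2)) gth2_gt0.
rewrite -oppr0; apply: cvgN; apply: (@bounded_div_ln_cvg0 _ _ (- ln c)).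
near=> rho.
have rho_gt0 : 0 < rho by near: rho; exact: nbhs_pinfty_gt.
have /andP[c_le p_le1] := outage_ge rho rho_gt0.
have p_gt0 := lt_le_trans c_gt0 c_le.
by rewrite ler0_norm ?ln_le0 // lerN2 ler_ln ?posrE.
Unshelve. all: by end_near. Qed.
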